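(* Let $(A^{\mathbb N},\mathbb B_\Pi(A^{\mathbb N}),m,\sigma)$ be a Markov shift over $A=\{0,1,\dots,l\}$ and let $\mathcal P=\{P_0,\dots,P_n\}\subset\mathbb B_\Pi(A^{\mathbb N})$ be a partition of $A^{\mathbb N}$ such that: (i) each $P_i$ is either a subset of some cylinder $C_a$, $a\in A$, or satisfies $\sigma^{-1}(P_i)=P_i$ and $m(P_i)=0$; (ii) for any $P_i,P_j\in\mathcal P$, either $P_i\cap\sigma^{-1}(P_j)=C_a\cap\sigma^{-1}(P_j)$ for some $a\in A$, or $m(P_i\cap\sigma^{-1}(P_j))=0$. Then $\mathcal P$ is generating and has the Markov property.
   Context: Markov shift over $A=\{0,\dots,l\}$: given an $(l+1)\times(l+1)$ stochastic matrix $Q=(q_{ij})$ and a stationary probability vector $p$ of $Q$ with all $p_a>0$, it is $(A^{\mathbb N},\mathbb B_\Pi(A^{\mathbb N}),m,\sigma)$ with $A^{\mathbb N}$ the one-sided sequences $s=(s_0,s_1,\dots)$, $\mathbb B_\Pi$ generated by cylinders $C_{a_0\dots a_{n-1}}=\{s: s_i=a_i, i<n\}$, $(\sigma s)_j=s_{j+1}$, and $m(C_{a_0\dots a_{n-1}})=p_{a_0}q_{a_0a_1}\cdots q_{a_{n-2}a_{n-1}}$. A finite measurable partition $\mathcal G=\{G_0,\dots,G_r\}$ is generating if for every measurable $B$ there is $A'$ in the $\sigma$-algebra generated by the sets $\sigma^{-k}(G_i)$, $k\in\mathbb N_0$, with $m(A'\triangle B)=0$. A finite partition $\mathcal M=\{M_0,\dots,M_r\}$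 has the Markov property if for all $n\in\mathbb N$ and $i_0,\dots,i_n$ with $m(M_{i_0}\cap\sigma^{-1}M_{i_1}\cap\dots\cap\sigma^{-(n-1)}M_{i_{n-1}})>0$, $\frac{m(M_{i_0}\cap\sigma^{-1}M_{i_1}\cap\dots\cap\sigma^{-n}M_{i_n})}{m(M_{i_0}\cap\dots\cap\sigma^{-(n-1)}M_{i_{n-1}})}=\frac{m(M_{i_{n-1}}\cap\sigma^{-1}M_{i_n})}{m(M_{i_{n-1}})}$. *)

From Stdlib Require Import Reals List Arith.
Open Scope R_scope.

Definition Alph (l : nat) : Type := {a : nat | (a <= l)%nat}.
Definition sym {l : nat} (x : Alph l) : nat := proj1_sig x.

Definition Seq (l : nat) : Type := nat -> Alph l.
Definition SetS (l : nat) : Type := Seq l -> Prop.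

Definition shift {l : nat} (k : nat) (s : Seq l) : Seq l := fun j => s (j + k)%nat.
Definition sigma {l : nat} (s : Seq l) : Seq l := shift 1 s.

Definition preim_shift {l : nat} (k : nat) (E : SetS l) : SetS l :=
  fun s => E (shift k s).

Definition inter {l : nat} (E F : SetS l) : SetS l := fun s => E s /\ F s.
Definition symdiff {l : nat} (E F : SetS l) : SetS l :=
  fun s => (E s /\ ~ F s) \/ (F s /\ ~ E s).

Inductive gen_sigma {l : nat} (F : SetS l -> Prop) : SetS l -> Prop :=
| gs_base : forall E, F E -> gen_sigma F E
| gs_compl : forall E, gen_sigma F E -> gen_sigma F (fun s => ~ E s)
| gs_union : forall E : nat -> SetS l, (forall k, gen_sigma F (E k)) ->
    gen_sigma F (fun s => exists k, E k s).

Definition cyl {l : nat} (w : list nat) : SetS l :=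
  fun s => forall i, (i < length w)%nat -> sym (s i) = nth i w 0%nat.

Definition is_cylinder {l : nat} (E : SetS l) : Prop :=
  exists w : list nat, forall s, E s <-> cyl w s.

Definition measurable {l : nat} (E : SetS l) : Prop := gen_sigma (@is_cylinder l) E.

Definition stochastic (l : nat) (Q : nat -> nat -> R) : Prop :=
  (forall i j, (i <= l)%nat -> (j <= l)%nat -> 0 <= Q i j) /\
  (forall i, (i <= l)%nat -> sum_f_R0 (fun j => Q i j) l = 1).

Definition stationary_pos (l : nat) (Q : nat -> nat -> R) (p : nat -> R) : Prop :=
  (forall a, (a <= l)%nat -> 0 < p a) /\
  sum_f_R0 p l = 1 /\
  (forall j, (j <= l)%nat -> sum_f_R0 (fun i => p i * Q i j) l = p j).

Fixpoint chain (Q : nat -> nat -> R) (a : nat) (w : list nat) : R :=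
  match w with
  | nil => 1
  | b :: w' => Q a b * chain Q b w'
  end.

Definition cyl_weight (Q : nat -> nat -> R) (p : nat -> R) (w : list nat) : R :=
  match w with
  | nil => 1
  | a :: w' => p a * chain Q a w'
  end.

(* m is a (countably additive, nonnegative) measure on B_Pi with the Markov
   cylinder values; by uniqueness of extension this determines m on B_Pi. *)
Definition markov_measure (l : nat) (Q : nat -> nat -> R) (p : nat -> R)
  (m : SetS l -> R) : Prop :=
  (forall E, measurable E -> 0 <= m E) /\
  (forall E : nat -> SetS l,
      (forall k, measurable (E k)) ->
      (forall i j, i <> j -> forall s, E i s -> E j s -> False) ->
      infinite_sum (fun k => m (E k)) (m (fun s => exists k, E k s))) /\
  (forall w : list nat, w <> nil -> (forall a, In a w -> (a <= l)%nat) ->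
      m (cyl w) = cyl_weight Q p w).

Definition meas_partition {l : nat} (P : nat -> SetS l) (n : nat) : Prop :=
  (forall i, (i <= n)%nat -> measurable (P i)) /\
  (forall i j, (i <= n)%nat -> (j <= n)%nat -> i <> j ->
     forall s, P i s -> P j s -> False) /\
  (forall s, exists i, (i <= n)%nat /\ P i s).

Definition generating {l : nat} (m : SetS l -> R) (P : nat -> SetS l) (n : nat) : Prop :=
  forall B, measurable B ->
    exists A', gen_sigma (fun E => exists k i, (i <= n)%nat /\
                             forall s, E s <-> preim_shift k (P i) s) A'
            /\ m (symdiff A' B) = 0.

Definition itin {l : nat} (P : nat -> SetS l) (idx : nat -> nat) (N : nat) : SetS l :=
  fun s => forall t, (t < N)%nat -> P (idx t) (shift t s).

Definition markov_property {l : nat} (m : SetS l -> R) (P : nat -> SetS l) (n : nat) : Prop :=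
  forall (N : nat) (idx : nat -> nat),
    (1 <= N)%nat ->
    (forall t, (t <= N)%nat -> (idx t <= n)%nat) ->
    0 < m (itin P idx N) ->
    m (itin P idx (S N)) / m (itin P idx N)
    = m (inter (P (idx (N - 1)%nat)) (preim_shift 1 (P (idx N))))
      / m (P (idx (N - 1)%nat)).

(* By (i), every atom of P either lies in a one-symbol cylinder C_a or is a shift-invariant null
   set.  Let Z be the union of the latter and Y_a the union of the atoms inside C_a: then
   C_a \ Y_a ⊆ Z, and as Z is backward invariant, C_{a_0...a_k} differs from ∩_j σ^{-j} Y_{a_j}
   only inside Z.  Sets approximable modulo null sets by σ(σ^{-k} P_i) form a σ-algebra, which
   therefore contains all cylinders: P is generating.

   For the Markov property, (ii) shows inductively that an itinerary
   M_{i_0} ∩ ... ∩ σ^{-K} M_{i_K} of positive measure equals C_w ∩ σ^{-K} M_{i_K} for a word w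
   of length K.  Then M_{i_K} ⊆ C_a for some a, and the Markov property of m,
   m(C_w ∩ σ^{-|w|} X) = m(C_w) q_{w_{K-1} a} / p_a · m(X) for measurable X ⊆ C_a (which follows
   from its cylinder case by uniqueness of extension), makes this factor cancel in the ratio. *)

From Stdlib Require Import Reals List Arith Lia Lra.
From Stdlib Require Import Classical FunctionalExtensionality PropExtensionality ClassicalEpsilon.
Open Scope R_scope.

(** * Generated σ-algebras *)

Lemma set_ext {l : nat} (A B : SetS l) : (forall s, A s <-> B s) -> A = B.
Proof.
  intros H; apply functional_extensionality; intro s; apply propositional_extensionality, H.
Qed.

Lemma finite_inter_closed {l : nat} (D : SetS l -> Prop) (E : nat -> SetS l) :
  D (fun _ => True) -> (forall A B, D A -> D B -> D (fun s => A s /\ B s)) ->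
  (forall k, D (E k)) -> forall K, D (fun s => forall k, (k < K)%nat -> E k s).
Proof.
  intros Hfull Hinter HE K; induction K as [|K IH].
  - rewrite (set_ext _ (fun _ => True)); [exact Hfull|].
    intros s; split; [auto | intros _ k Hk; lia].
  - rewrite (set_ext _ (fun s => (forall k, (k < K)%nat -> E k s) /\ E K s)); [auto|].
    intros s; split.
    + intros H; split; [intros k Hk; apply H; lia | apply H; lia].
    + intros [H HK] k Hk; destruct (Nat.eq_dec k K) as [->|]; [exact HK | apply H; lia].
Qed.

Section GeneratedSigmaAlgebra.
Context {l : nat} {F : SetS l -> Prop}.

Lemma gen_sigma_ext (A B : SetS l) :
  gen_sigma F A -> (forall s, A s <-> B s) -> gen_sigma F B.
Proof. intros H E; rewrite <- (set_ext _ _ E); exact H. Qed.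

Lemma gen_sigma_union2 (A B : SetS l) :
  gen_sigma F A -> gen_sigma F B -> gen_sigma F (fun s => A s \/ B s).
Proof.
  intros HA HB.
  apply (gen_sigma_ext (fun s => exists k, (match k with 0%nat => A | _ => B end) s)).
  - apply gs_union; intros [|k]; assumption.
  - intros s; split.
    + intros [[|k] H]; auto.
    + intros [H|H]; [exists 0%nat | exists 1%nat]; exact H.
Qed.

Lemma gen_sigma_inter (A B : SetS l) :
  gen_sigma F A -> gen_sigma F B -> gen_sigma F (fun s => A s /\ B s).
Proof.
  intros HA HB.
  apply (gen_sigma_ext (fun s => ~ (~ A s \/ ~ B s))).
  - apply gs_compl, gen_sigma_union2; apply gs_compl; assumption.
  - intros s; split; [intros H; split; apply NNPP; tauto | tauto].
Qed.

Lemma gen_sigma_full (A : SetS l) : gen_sigma F A -> gen_sigma F (fun _ => True).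
Proof.
  intros HA; apply (gen_sigma_ext (fun s => A s \/ ~ A s)).
  - apply gen_sigma_union2; [|apply gs_compl]; exact HA.
  - intros s; split; [auto | intros _; apply classic].
Qed.

Lemma gen_sigma_empty (A : SetS l) : gen_sigma F A -> gen_sigma F (fun _ => False).
Proof.
  intros HA; apply (gen_sigma_ext (fun s => ~ True)); [apply gs_compl, (gen_sigma_full _ HA) | tauto].
Qed.

Lemma gen_sigma_if (C : Prop) (A : SetS l) :
  gen_sigma F A -> gen_sigma F (fun s => C /\ A s).
Proof.
  intros HA; destruct (classic C) as [HC|HC].
  - apply (gen_sigma_ext A); [exact HA | tauto].
  - apply (gen_sigma_ext (fun _ => False)); [apply (gen_sigma_empty _ HA) | tauto].
Qed.

Lemma gen_sigma_finite_inter (E : nat -> SetS l) (K : nat) :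
  (forall k, gen_sigma F (E k)) -> gen_sigma F (fun s => forall k, (k < K)%nat -> E k s).
Proof.
  intros HE; apply finite_inter_closed; [exact (gen_sigma_full _ (HE 0%nat)) | apply gen_sigma_inter | exact HE].
Qed.

End GeneratedSigmaAlgebra.

Lemma gen_sigma_mono {l : nat} (F G : SetS l -> Prop) (E : SetS l) :
  (forall A, F A -> gen_sigma G A) -> gen_sigma F E -> gen_sigma G E.
Proof.
  intros HFG H; induction H; [auto | apply gs_compl | apply gs_union]; assumption.
Qed.

Lemma gen_sigma_preim_shift {l : nat} (F G : SetS l -> Prop) (k : nat) (E : SetS l) :
  (forall A, F A -> gen_sigma G (preim_shift k A)) -> gen_sigma F E ->
  gen_sigma G (preim_shift k E).
Proof.
  intros HFG H; induction H; [auto | apply gs_compl | apply gs_union]; assumption.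
Qed.

(** * Cylinders and the shift *)

Lemma shift_shift {l : nat} (k j : nat) (s : Seq l) : shift k (shift j s) = shift (k + j) s.
Proof. unfold shift; apply functional_extensionality; intro x; f_equal; lia. Qed.

Lemma shift_0 {l : nat} (s : Seq l) : shift 0 s = s.
Proof. unfold shift; apply functional_extensionality; intro x; f_equal; lia. Qed.

Lemma invariant_shift_iter {l : nat} (A : SetS l) :
  (forall s, preim_shift 1 A s <-> A s) -> forall j s, A (shift j s) -> A s.
Proof.
  intros HA j; induction j as [|j IH]; intros s H.
  - rewrite shift_0 in H; exact H.
  - apply IH, HA; unfold preim_shift; rewrite shift_shift; exact H.
Qed.

Lemma cyl_nil {l : nat} (s : Seq l) : cyl nil s.
Proof. intros i Hi; simpl in Hi; lia. Qed.

Lemma cyl_nil_inter {l : nat} (A : SetS l) : (fun s => cyl nil s /\ A (shift 0 s)) = A.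
Proof. apply set_ext; intros s; rewrite shift_0; pose proof (cyl_nil s); tauto. Qed.

Lemma cyl_app {l : nat} (u v : list nat) (s : Seq l) :
  cyl (u ++ v) s <-> cyl u s /\ cyl v (shift (length u) s).
Proof.
  unfold cyl, shift; split.
  - intros H; split.
    + intros i Hi; rewrite <- (app_nth1 u v 0%nat Hi); apply H; rewrite length_app; lia.
    + intros i Hi; specialize (H (i + length u)%nat ltac:(rewrite length_app; lia)).
      rewrite app_nth2, Nat.add_sub in H by lia; exact H.
  - intros [Hu Hv] i Hi; rewrite length_app in Hi.
    destruct (Nat.lt_ge_cases i (length u)).
    + rewrite app_nth1; auto.
    + rewrite app_nth2 by lia; specialize (Hv (i - length u)%nat ltac:(lia)).
      rewrite Nat.sub_add in Hv by lia; exact Hv.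
Qed.

Lemma cyl_cons {l : nat} (a : nat) (v : list nat) (s : Seq l) :
  cyl (a :: v) s <-> sym (s 0%nat) = a /\ cyl v (shift 1 s).
Proof.
  rewrite (cyl_app (a :: nil) v); unfold cyl; simpl; split.
  - intros [H Hv]; split; [apply (H 0%nat); lia | exact Hv].
  - intros [H Hv]; split; [intros [|i] Hi; [exact H | lia] | exact Hv].
Qed.

Lemma cyl_one {l : nat} (a : nat) (s : Seq l) : cyl (a :: nil) s <-> sym (s 0%nat) = a.
Proof. rewrite cyl_cons; pose proof (cyl_nil (shift 1 s)); tauto. Qed.

Lemma cyl_out_of_range {l : nat} (v : list nat) (s : Seq l) :
  (exists x, In x v /\ (l < x)%nat) -> ~ cyl v s.
Proof.
  intros [x [Hx Hl]] H; destruct (In_nth v x 0%nat Hx) as [i [Hi Hn]].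
  specialize (H i Hi); rewrite Hn in H; destruct (s i) as [b Hb]; simpl in H; lia.
Qed.

Lemma is_cylinder_inter {l : nat} (A B : SetS l) :
  is_cylinder A -> is_cylinder B -> is_cylinder (fun s => A s /\ B s).
Proof.
  intros [v Hv] [w Hw].
  enough (Hz : exists z, forall s : Seq l, cyl v s /\ cyl w s <-> cyl z s).
  { destruct Hz as [z Hz]; exists z; intros s; rewrite Hv, Hw; apply Hz. }
  clear Hv Hw; revert w; induction v as [|a v IH]; intros [|b w].
  - exists nil; pose proof (@cyl_nil l); firstorder.
  - exists (b :: w); pose proof (@cyl_nil l); firstorder.
  - exists (a :: v); pose proof (@cyl_nil l); firstorder.
  - destruct (Nat.eq_dec a b) as [<-|Hab].
    + destruct (IH w) as [z Hz]; exists (a :: z); intros s; rewrite !cyl_cons, <- Hz; tauto.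
    + exists (S l :: nil); intros s; rewrite !cyl_cons; split.
      * intros [[Ha _] [Hb _]]; congruence.
      * intros H; exfalso; apply (cyl_out_of_range (S l :: nil) s); [exists (S l); simpl; auto|].
        rewrite cyl_cons; split; [apply H | apply cyl_nil].
Qed.

Lemma cyl_one_inter {l : nat} (a : nat) (v : list nat) :
  (forall s : Seq l, ~ (cyl (a :: nil) s /\ cyl v s)) \/
  exists u, (forall x, In x u -> (x <= l)%nat) /\
    forall s : Seq l, cyl (a :: nil) s /\ cyl v s <-> cyl (a :: u) s.
Proof.
  destruct (classic (exists x, In x v /\ (l < x)%nat)) as [Hout|Hin].
  { left; intros s [_ H]; exact (cyl_out_of_range v s Hout H). }
  assert (Hv : forall x, In x v -> (x <= l)%nat).
  { intros x Hx; apply Nat.nlt_ge; intros Hlt; apply Hin; eauto. }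
  destruct v as [|b u].
  - right; exists nil; split; [intros x []|].
    intros s; pose proof (cyl_nil s); tauto.
  - destruct (Nat.eq_dec a b) as [<-|Hab].
    + right; exists u; split; [intros x Hx; apply Hv; right; exact Hx|].
      intros s; rewrite cyl_one, !cyl_cons; tauto.
    + left; intros s; rewrite cyl_one, cyl_cons; intros [Ha [Hb _]]; congruence.
Qed.

Lemma measurable_cyl {l : nat} (w : list nat) : measurable (@cyl l w).
Proof. apply gs_base; exists w; tauto. Qed.

Lemma measurable_preim_sigma {l : nat} (E : SetS l) :
  measurable E -> measurable (preim_shift 1 E).
Proof.
  apply gen_sigma_preim_shift; intros A [w Hw].
  apply (gen_sigma_ext (fun s => exists b, cyl (b :: w) s)).
  - apply gs_union; intros b; apply measurable_cyl.
  - intros s; unfold preim_shift; rewrite Hw; split.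
    + intros [b Hb]; apply cyl_cons in Hb; apply Hb.
    + intros H; exists (sym (s 0%nat)); apply cyl_cons; auto.
Qed.

Lemma measurable_preim_shift {l : nat} (k : nat) (E : SetS l) :
  measurable E -> measurable (preim_shift k E).
Proof.
  intros HE; induction k as [|k IH].
  - apply (gen_sigma_ext E); [exact HE|].
    intros s; unfold preim_shift; rewrite shift_0; tauto.
  - apply (gen_sigma_ext (preim_shift 1 (preim_shift k E))); [apply measurable_preim_sigma, IH|].
    intros s; unfold preim_shift; rewrite shift_shift, Nat.add_1_r; tauto.
Qed.

(** * σ-additive set functions and uniqueness of extension *)

Definition pairwise_disjoint {l : nat} (E : nat -> SetS l) : Prop :=
  forall i j, i <> j -> forall s, E i s -> E j s -> False.

Definition sigma_additive {l : nat} (nu : SetS l -> R) : Prop :=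
  nu (fun _ => False) = 0 /\
  forall E : nat -> SetS l, (forall k, measurable (E k)) -> pairwise_disjoint E ->
    infinite_sum (fun k => nu (E k)) (nu (fun s => exists k, E k s)).

Lemma infinite_sum_stationary (f : nat -> R) (N : nat) (x : R) :
  (forall n, (N <= n)%nat -> sum_f_R0 f n = x) -> infinite_sum f x.
Proof.
  intros H eps Heps; exists N; intros n Hn.
  unfold R_dist; rewrite H, Rminus_diag, Rabs_R0 by exact Hn; exact Heps.
Qed.

Lemma infinite_sum_const_eq0 (x : R) : infinite_sum (fun _ => x) x -> x = 0.
Proof.
  intros H; destruct (Req_dec x 0) as [|Hx]; [assumption | exfalso].
  destruct (H (Rabs x / 2)) as [N HN]; [pose proof (Rabs_pos_lt x Hx); lra|].
  pose proof (HN N (le_n N)) as HN0; pose proof (HN (S N) (Nat.le_succ_diag_r N)) as HN1.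
  unfold R_dist in *; simpl in HN1; set (S_N := sum_f_R0 (fun _ => x) N) in *.
  replace (S_N + x - x) with S_N in HN1 by ring.
  pose proof (Rabs_triang S_N (- (S_N - x))) as Htri.
  rewrite Rabs_Ropp in Htri; replace (S_N + - (S_N - x)) with x in Htri by ring.
  lra.
Qed.

Lemma union2_as_union {l : nat} (A B : SetS l) (s : Seq l) :
  A s \/ B s <-> exists k, (match k with 0%nat => A | 1%nat => B | _ => fun _ => False end) s.
Proof.
  split.
  - intros [H|H]; [exists 0%nat | exists 1%nat]; exact H.
  - intros [[|[|k]] H]; tauto.
Qed.

Section SigmaAdditive.
Context {l : nat} (nu : SetS l -> R).
Hypothesis Hnu : sigma_additive nu.

Lemma sigma_additive_add (A B : SetS l) :
  measurable A -> measurable B -> (forall s, A s -> B s -> False) ->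
  nu (fun s => A s \/ B s) = nu A + nu B.
Proof.
  intros HA HB Hd; destruct Hnu as [H0 Hsum].
  set (E := fun k : nat => match k with 0%nat => A | 1%nat => B | _ => fun _ => False end).
  rewrite (set_ext _ _ (union2_as_union A B)); fold E.
  apply (uniqueness_sum (fun k => nu (E k))).
  - apply Hsum.
    + intros [|[|k]]; [exact HA | exact HB | exact (gen_sigma_empty _ HA)].
    + intros [|[|i]] [|[|j]] Hij s; simpl; try tauto; try lia; eauto.
  - apply (infinite_sum_stationary _ 1); intros [|[|k]] Hk; [lia| simpl; ring |].
    induction k as [|k IH]; simpl in *; [rewrite H0; ring | rewrite IH, H0 by lia; ring].
Qed.

Lemma sigma_additive_compl (A : SetS l) :
  measurable A -> nu (fun s => ~ A s) = nu (fun _ => True) - nu A.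
Proof.
  intros HA; rewrite (set_ext (fun _ => True) (fun s => A s \/ ~ A s)).
  - rewrite sigma_additive_add; [ring | exact HA | apply gs_compl, HA | tauto].
  - intros s; split; [intros _; apply classic | auto].
Qed.

Lemma sigma_additive_scale (c : R) : sigma_additive (fun E => c * nu E).
Proof.
  destruct Hnu as [H0 Hsum]; split; [rewrite H0; ring|].
  intros E HE Hd.
  assert (Hc : Un_cv (fun _ => c) c).
  { intros eps Heps; exists 0%nat; intros; unfold R_dist; rewrite Rminus_diag, Rabs_R0; exact Heps. }
  intros eps Heps; destruct (CV_mult _ _ _ _ Hc (Hsum E HE Hd) eps Heps) as [N HN].
  exists N; intros k Hk; specialize (HN k Hk); cbv beta in HN; rewrite scal_sum in HN.
  rewrite (sum_eq _ (fun i => nu (E i) * c)) by (intros; ring); exact HN.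
Qed.

Lemma sigma_additive_restrict (G : SetS l) :
  measurable G -> sigma_additive (fun E => nu (fun s => G s /\ E s)).
Proof.
  intros HG; destruct Hnu as [H0 Hsum]; split.
  - rewrite <- H0; f_equal; apply set_ext; tauto.
  - intros E HE Hd.
    rewrite (set_ext (fun s => G s /\ exists k, E k s) (fun s => exists k, G s /\ E k s))
      by firstorder.
    apply Hsum; [intros k; apply gen_sigma_inter; [exact HG | apply HE] | intros i j Hij s [_ Hi] [_ Hj]; exact (Hd i j Hij s Hi Hj)].
Qed.

Lemma sigma_additive_preim_shift (k : nat) : sigma_additive (fun E => nu (preim_shift k E)).
Proof.
  destruct Hnu as [H0 Hsum]; split; [exact H0|].
  intros E HE Hd; apply Hsum; [intros j; apply measurable_preim_shift, HE | intros i j Hij s; apply Hd, Hij].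
Qed.

End SigmaAdditive.

Definition disjointify {l : nat} (E : nat -> SetS l) : nat -> SetS l :=
  fun k s => E k s /\ forall j, (j < k)%nat -> ~ E j s.

Lemma disjointify_disjoint {l : nat} (E : nat -> SetS l) : pairwise_disjoint (disjointify E).
Proof.
  intros i j Hij s [Hi Hi'] [Hj Hj'].
  destruct (Nat.lt_gt_cases i j) as [[Hlt|Hlt] _]; [exact Hij | exact (Hj' i Hlt Hi) | exact (Hi' j Hlt Hj)].
Qed.

Lemma disjointify_union {l : nat} (E : nat -> SetS l) (s : Seq l) :
  (exists k, disjointify E k s) <-> (exists k, E k s).
Proof.
  split; [intros [k [Hk _]]; eauto|].
  intros [k Hk]; induction k as [k IH] using (well_founded_induction lt_wf).
  destruct (classic (exists j, (j < k)%nat /\ E j s)) as [[j [Hjk Hj]]|Hn].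
  - exact (IH j Hjk Hj).
  - exists k; split; [exact Hk | intros j Hjk Hj; eauto].
Qed.

Lemma disjointify_closed {l : nat} (D : SetS l -> Prop) (E : nat -> SetS l) :
  D (fun _ => True) -> (forall A B, D A -> D B -> D (fun s => A s /\ B s)) ->
  (forall A, D A -> D (fun s => ~ A s)) ->
  (forall k, D (E k)) -> forall k, D (disjointify E k).
Proof.
  intros Hfull Hinter Hcompl HE k; apply Hinter; [apply HE|].
  apply (finite_inter_closed D (fun j s => ~ E j s)); auto.
Qed.

Definition dynkin_system {l : nat} (D : SetS l -> Prop) : Prop :=
  D (fun _ => True) /\ (forall E, D E -> D (fun s => ~ E s)) /\
  (forall E : nat -> SetS l, (forall k, D (E k)) -> pairwise_disjoint E ->
     D (fun s => exists k, E k s)).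

Definition dynkin_generated {l : nat} (E : SetS l) : Prop :=
  forall D, dynkin_system D -> (forall C, is_cylinder C -> D C) -> D E.

Section DynkinGenerated.
Context {l : nat}.

Lemma dynkin_generated_system : dynkin_system (@dynkin_generated l).
Proof.
  split; [|split].
  - intros D HD _; apply HD.
  - intros E HE D HD HC; apply HD, HE; auto.
  - intros E HE Hd D HD HC; apply HD; [intros k; apply HE; auto | exact Hd].
Qed.

Lemma dynkin_generated_ext (A B : SetS l) :
  dynkin_generated A -> (forall s, A s <-> B s) -> dynkin_generated B.
Proof. intros H E; rewrite <- (set_ext _ _ E); exact H. Qed.

Lemma dynkin_generated_union2 (A B : SetS l) :
  dynkin_generated A -> dynkin_generated B -> (forall s, A s -> B s -> False) ->
  dynkin_generated (fun s => A s \/ B s).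
Proof.
  intros HA HB Hd; rewrite (set_ext _ _ (union2_as_union A B)).
  destruct dynkin_generated_system as [Hfull [Hcompl Hunion]].
  apply Hunion.
  - intros [|[|k]]; [exact HA | exact HB |].
    apply (dynkin_generated_ext (fun s => ~ True)); [apply Hcompl, Hfull | tauto].
  - intros [|[|i]] [|[|j]] Hij s; simpl; try tauto; try lia; eauto.
Qed.

Lemma dynkin_system_trace (A : SetS l) :
  dynkin_generated A -> dynkin_system (fun E => dynkin_generated (fun s => E s /\ A s)).
Proof.
  intros HA; destruct dynkin_generated_system as [Hfull [Hcompl Hunion]]; split; [|split].
  - apply (dynkin_generated_ext A); [exact HA | tauto].
  - intros E HE.
    apply (dynkin_generated_ext (fun s => ~ (~ A s \/ (E s /\ A s)))).
    + apply Hcompl, dynkin_generated_union2; [apply Hcompl, HA | exact HE | tauto].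
    + intros s; split; [intros H; split; [intros HEs | apply NNPP]; tauto | tauto].
  - intros E HE Hd.
    apply (dynkin_generated_ext (fun s => exists k, E k s /\ A s)); [|firstorder].
    apply Hunion; [exact HE | intros i j Hij s [Hi _] [Hj _]; exact (Hd i j Hij s Hi Hj)].
Qed.

Lemma dynkin_generated_inter (A B : SetS l) :
  dynkin_generated A -> dynkin_generated B -> dynkin_generated (fun s => A s /\ B s).
Proof.
  intros HA HB; apply (HA (fun E => dynkin_generated (fun s => E s /\ B s))).
  - apply dynkin_system_trace, HB.
  - intros C HC; apply (dynkin_generated_ext (fun s => B s /\ C s)); [|tauto].
    apply (HB (fun E => dynkin_generated (fun s => E s /\ C s))).
    + apply dynkin_system_trace; intros D _ HD; apply HD, HC.
    + intros C' HC' D _ HD; apply HD, is_cylinder_inter; assumption.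
Qed.

Lemma measurable_dynkin_generated (E : SetS l) : measurable E -> dynkin_generated E.
Proof.
  destruct dynkin_generated_system as [Hfull [Hcompl Hunion]].
  intros H; induction H as [E HE|E _ IH|E _ IH].
  - intros D _ HD; apply HD, HE.
  - apply Hcompl, IH.
  - rewrite <- (set_ext _ _ (disjointify_union E)).
    apply Hunion; [|apply disjointify_disjoint].
    apply disjointify_closed; auto; apply dynkin_generated_inter.
Qed.

End DynkinGenerated.

Lemma pi_lambda {l : nat} (D : SetS l -> Prop) :
  dynkin_system D -> (forall C, is_cylinder C -> D C) -> forall E, measurable E -> D E.
Proof. intros HD HC E HE; apply (measurable_dynkin_generated E HE); assumption. Qed.

Lemma sigma_additive_unique {l : nat} (nu1 nu2 : SetS l -> R) :
  sigma_additive nu1 -> sigma_additive nu2 -> (forall C, is_cylinder C -> nu1 C = nu2 C) ->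
  forall E, measurable E -> nu1 E = nu2 E.
Proof.
  intros Hnu1 Hnu2 HC E HE.
  apply (pi_lambda (fun E => measurable E /\ nu1 E = nu2 E)); [split; [|split] | | exact HE].
  - assert (Hfull : is_cylinder (fun _ : Seq l => True)) by (exists nil; pose proof (@cyl_nil l); firstorder).
    split; [apply gs_base | apply HC]; exact Hfull.
  - intros A [HA Heq]; split; [apply gs_compl, HA|].
    rewrite !sigma_additive_compl, Heq by assumption; f_equal.
    apply HC; exists nil; pose proof (@cyl_nil l); firstorder.
  - intros F HF Hd; split; [apply gs_union; intros k; apply HF|].
    apply (uniqueness_sum (fun k => nu1 (F k))); [apply Hnu1; [apply HF | exact Hd]|].
    rewrite (functional_extensionality (fun k => nu1 (F k)) (fun k => nu2 (F k))) by (intros k; apply HF).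
    apply Hnu2; [apply HF | exact Hd].
  - intros C HC'; split; [apply gs_base, HC' | apply HC, HC'].
Qed.

(** * The Markov measure *)

Lemma last_cons {A : Type} (a b : A) (w : list A) : last (b :: w) a = last w b.
Proof.
  revert a b; induction w as [|c w IH]; intros a b; [reflexivity|].
  change (last (c :: w) a = last (c :: w) b); rewrite !IH; reflexivity.
Qed.

Lemma chain_app (Q : nat -> nat -> R) (a : nat) (w u : list nat) :
  chain Q a (w ++ u) = chain Q a w * chain Q (last w a) u.
Proof.
  revert a; induction w as [|b w IH]; intros a; cbn [app chain]; [simpl; ring|].
  rewrite IH, last_cons; ring.
Qed.

Lemma cyl_weight_app (Q : nat -> nat -> R) (p : nat -> R) (w u : list nat) (a : nat) :
  w <> nil ->
  cyl_weight Q p (w ++ a :: u) = cyl_weight Q p w * Q (last w 0%nat) a * chain Q a u.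
Proof.
  destruct w as [|b w]; [congruence|]; intros _; cbn [app cyl_weight].
  rewrite chain_app, last_cons; cbn [chain]; ring.
Qed.

Lemma measurable_symdiff {l : nat} (A B : SetS l) :
  measurable A -> measurable B -> measurable (symdiff A B).
Proof.
  intros HA HB; apply gen_sigma_union2; apply gen_sigma_inter; auto; apply gs_compl; assumption.
Qed.

Section MarkovMeasure.
Variables (l : nat) (Q : nat -> nat -> R) (p : nat -> R) (m : SetS l -> R).
Hypothesis Hm : markov_measure l Q p m.

Lemma markov_sigma_additive : sigma_additive m.
Proof.
  destruct Hm as [_ [Hsum _]]; split; [|exact Hsum].
  apply infinite_sum_const_eq0.
  rewrite (set_ext (fun _ => False) (fun s => exists _ : nat, False)) at 1 by firstorder.
  apply Hsum; [intros _; exact (gen_sigma_empty _ (measurable_cyl nil)) | intros i j _ s []].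
Qed.

Lemma measure_empty (A : SetS l) : (forall s, ~ A s) -> m A = 0.
Proof.
  intros H; rewrite (set_ext A (fun _ => False)) by firstorder; apply markov_sigma_additive.
Qed.

Lemma measure_mono (A B : SetS l) :
  measurable A -> measurable B -> (forall s, A s -> B s) -> m A <= m B.
Proof.
  intros HA HB Hsub.
  assert (HBA : measurable (fun s => B s /\ ~ A s)) by (apply gen_sigma_inter, gs_compl; assumption).
  rewrite (set_ext B (fun s => A s \/ (B s /\ ~ A s))).
  - rewrite (sigma_additive_add m markov_sigma_additive) by (assumption || tauto).
    pose proof (proj1 Hm _ HBA); lra.
  - intros s; destruct (classic (A s)); firstorder.
Qed.

Lemma measure_null_subset (A Z : SetS l) :
  measurable A -> measurable Z -> m Z = 0 -> (forall s, A s -> Z s) -> m A = 0.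
Proof.
  intros HA HZ HZ0 Hsub; pose proof (measure_mono A Z HA HZ Hsub); pose proof (proj1 Hm A HA); lra.
Qed.

Lemma measure_null_union (E : nat -> SetS l) :
  (forall k, measurable (E k)) -> (forall k, m (E k) = 0) -> m (fun s => exists k, E k s) = 0.
Proof.
  intros HE HE0.
  assert (HD : forall k, measurable (disjointify E k)).
  { apply disjointify_closed; [exact (gen_sigma_full _ (HE 0%nat)) | apply gen_sigma_inter | apply gs_compl | exact HE]. }
  rewrite <- (set_ext _ _ (disjointify_union E)).
  apply (uniqueness_sum (fun k => m (disjointify E k))).
  - apply markov_sigma_additive; [exact HD | apply disjointify_disjoint].
  - apply (infinite_sum_stationary _ 0); intros n _; induction n as [|n IH]; simpl;
      rewrite ?IH, (measure_null_subset _ (E _) (HD _) (HE _) (HE0 _)) by (intros s [Hs _]; exact Hs); ring.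
Qed.

Section ShiftScaling.
Variables (w : list nat) (a : nat).
Hypotheses (Hw : w <> nil) (Hw_range : forall x, In x w -> (x <= l)%nat)
  (Ha : (a <= l)%nat) (Hpa : 0 < p a).

Let c := cyl_weight Q p w * Q (last w 0%nat) a / p a.

Lemma markov_cylinder_shift_scale (v : list nat) :
  m (fun s => cyl w s /\ (cyl (a :: nil) (shift (length w) s) /\ cyl v (shift (length w) s)))
  = c * m (fun s => cyl (a :: nil) s /\ cyl v s).
Proof.
  destruct Hm as [_ [_ Hcyl]].
  destruct (@cyl_one_inter l a v) as [Hempty|[u [Hu Hau]]].
  - rewrite !measure_empty; [ring | firstorder | ].
    intros s [_ H]; exact (Hempty _ H).
  - assert (Hwu : forall x, In x (w ++ a :: u) -> (x <= l)%nat).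
    { intros x Hx; apply in_app_or in Hx; destruct Hx as [Hx|[<-|Hx]]; auto. }
    assert (Hau' : forall x, In x (a :: u) -> (x <= l)%nat) by (intros x [<-|Hx]; auto).
    rewrite (set_ext (fun s => cyl (a :: nil) s /\ cyl v s) (cyl (a :: u))) by exact Hau.
    rewrite (set_ext _ (cyl (w ++ a :: u))) by (intros s; rewrite cyl_app, <- Hau; tauto).
    rewrite !Hcyl, cyl_weight_app by (assumption || discriminate || now destruct w).
    unfold c; cbn [cyl_weight]; field; lra.
Qed.

(* The Markov property of [m]: after a word [w], the future restricted to [C_a] is distributed as [m]
   up to the factor [m(C_w) q_{last w, a} / p_a]. *)
Lemma markov_shift_scale (X : SetS l) :
  measurable X -> (forall s, X s -> cyl (a :: nil) s) ->
  m (fun s => cyl w s /\ X (shift (length w) s)) = c * m X.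
Proof.
  intros HX HXa.
  set (nu1 := fun E => m (fun s => cyl w s /\ preim_shift (length w) (fun t => cyl (a :: nil) t /\ E t) s)).
  set (nu2 := fun E => c * m (fun t => cyl (a :: nil) t /\ E t)).
  assert (Heq : nu1 X = nu2 X).
  { apply sigma_additive_unique; [| | | exact HX].
    - apply (sigma_additive_restrict (fun E => m (fun s => cyl w s /\ preim_shift (length w) E s))),
        measurable_cyl.
      apply (sigma_additive_preim_shift (fun E => m (fun s => cyl w s /\ E s))).
      apply sigma_additive_restrict, measurable_cyl.
      exact markov_sigma_additive.
    - apply sigma_additive_scale, sigma_additive_restrict, measurable_cyl; exact markov_sigma_additive.
    - intros C [v Hv]; rewrite (set_ext _ _ Hv); apply markov_cylinder_shift_scale. }
  assert (HaX : forall t, cyl (a :: nil) t /\ X t <-> X t) by firstorder.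
  unfold nu1, nu2, preim_shift in Heq; rewrite (set_ext _ _ HaX) in Heq.
  rewrite <- Heq; f_equal; apply set_ext; intros s; rewrite HaX; tauto.
Qed.

End ShiftScaling.

Definition approximable (F : SetS l -> Prop) (B : SetS l) : Prop :=
  exists A, gen_sigma F A /\ m (symdiff A B) = 0.

(* Sets approximable modulo null sets by [σ(F)] form a σ-algebra. *)
Lemma approximable_measurable (F : SetS l -> Prop) :
  (forall E, F E -> measurable E) -> (forall C, is_cylinder C -> approximable F C) ->
  forall B, measurable B -> approximable F B.
Proof.
  intros HF HC B HB; induction HB as [B HB|B _ [A [HA HA0]]|B HB IH].
  - exact (HC B HB).
  - exists (fun s => ~ A s); split; [apply gs_compl, HA|].
    rewrite <- HA0; f_equal; apply set_ext; intros s; unfold symdiff; tauto.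
  - destruct (choice _ IH) as [A HA].
    assert (HAm : forall k, measurable (A k)) by (intros k; apply (gen_sigma_mono F), HA; exact HF).
    exists (fun s => exists k, A k s); split; [apply gs_union; intros k; apply HA|].
    apply (measure_null_subset _ (fun s => exists k, symdiff (A k) (B k) s)).
    + apply measurable_symdiff; apply gs_union; assumption.
    + apply gs_union; intros k; apply measurable_symdiff; [apply HAm | apply HB].
    + apply measure_null_union; [intros k; apply measurable_symdiff; [apply HAm | apply HB] | intros k; apply HA].
    + intros s [[[k Hk] Hn]|[[k Hk] Hn]]; exists k; unfold symdiff; [left|right]; split; eauto.
Qed.

End MarkovMeasure.

(** * Partitions satisfying (i) and (ii) *)

Definition partition_sets {l : nat} (P : nat -> SetS l) (n : nat) (E : SetS l) : Prop :=
  exists k i, (i <= n)%nat /\ forall s, E s <-> preim_shift k (P i) s.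

Lemma itin_S {l : nat} (P : nat -> SetS l) (idx : nat -> nat) (N : nat) (s : Seq l) :
  itin P idx (S N) s <-> itin P idx N s /\ P (idx N) (shift N s).
Proof.
  unfold itin; split.
  - intros H; split; auto.
  - intros [H HN] t Ht; destruct (Nat.eq_dec t N) as [->|]; [exact HN | apply H; lia].
Qed.

Section Partition.
Variables (l : nat) (Q : nat -> nat -> R) (p : nat -> R) (m : SetS l -> R).
Variables (n : nat) (P : nat -> SetS l).
Hypothesis Hm : markov_measure l Q p m.
Hypothesis HPm : forall i, (i <= n)%nat -> measurable (P i).
Hypothesis Hatom : forall i, (i <= n)%nat ->
  (exists a, (a <= l)%nat /\ forall s, P i s -> cyl (a :: nil) s)
  \/ ((forall s, preim_shift 1 (P i) s <-> P i s) /\ m (P i) = 0).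

Lemma measurable_partition_sets (E : SetS l) : partition_sets P n E -> measurable E.
Proof.
  intros [k [i [Hi HE]]]; apply (gen_sigma_ext (preim_shift k (P i))); [|firstorder].
  apply measurable_preim_shift, HPm, Hi.
Qed.

Lemma partition_sets_preim_shift (k : nat) (E : SetS l) :
  gen_sigma (partition_sets P n) E -> gen_sigma (partition_sets P n) (preim_shift k E).
Proof.
  apply gen_sigma_preim_shift; intros A [j [i [Hi HA]]]; apply gs_base.
  exists (j + k)%nat, i; split; [exact Hi|].
  intros s; unfold preim_shift; rewrite HA; unfold preim_shift; rewrite shift_shift; tauto.
Qed.

Lemma partition_sets_atom (i : nat) : (i <= n)%nat -> gen_sigma (partition_sets P n) (P i).
Proof.
  intros Hi; apply gs_base; exists 0%nat, i; split; [exact Hi|].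
  intros s; unfold preim_shift; rewrite shift_0; tauto.
Qed.

Lemma partition_sets_atom_if (i : nat) (C : Prop) :
  gen_sigma (partition_sets P n) (fun s => ((i <= n)%nat /\ C) /\ P i s).
Proof.
  destruct (le_dec i n) as [Hi|Hi].
  - apply (gen_sigma_ext (fun s => ((i <= n)%nat /\ C) /\ P i s)); [|tauto].
    apply gen_sigma_if, partition_sets_atom, Hi.
  - apply (gen_sigma_ext (fun _ => False)); [|tauto].
    apply (gen_sigma_empty _ (partition_sets_atom 0 (Nat.le_0_l n))).
Qed.

Lemma measurable_atom_if (i : nat) (C : Prop) :
  measurable (fun s => ((i <= n)%nat /\ C) /\ P i s).
Proof. apply (gen_sigma_mono _ _ _ measurable_partition_sets), partition_sets_atom_if. Qed.

Definition null_part : SetS l :=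
  fun s => exists i, ((i <= n)%nat /\ (forall t, preim_shift 1 (P i) t <-> P i t) /\ m (P i) = 0)
                     /\ P i s.

Definition cyl_part (a : nat) : SetS l :=
  fun s => exists i, ((i <= n)%nat /\ forall t, P i t -> cyl (a :: nil) t) /\ P i s.

Lemma measurable_null_part : measurable null_part.
Proof. apply gs_union; intros i; apply measurable_atom_if. Qed.

Lemma null_part_null : m null_part = 0.
Proof.
  apply (measure_null_union l Q p m Hm); intros i; [apply measurable_atom_if|].
  destruct (classic ((i <= n)%nat /\ (forall t, preim_shift 1 (P i) t <-> P i t) /\ m (P i) = 0))
    as [HC|HC].
  - rewrite <- (proj2 (proj2 HC)); f_equal; apply set_ext; tauto.
  - apply (measure_empty l Q p m Hm); tauto.
Qed.

Lemma null_part_shift (j : nat) (s : Seq l) : null_part (shift j s) -> null_part s.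
Proof.
  intros [i [[Hi [Hinv H0]] Hs]]; exists i; split; [auto | exact (invariant_shift_iter _ Hinv j s Hs)].
Qed.

Lemma cyl_part_sub (a : nat) (s : Seq l) : cyl_part a s -> cyl (a :: nil) s.
Proof. intros [i [[_ Ha] Hs]]; exact (Ha s Hs). Qed.

Hypothesis Hcover : forall s, exists i, (i <= n)%nat /\ P i s.

Lemma cyl_sub_cyl_part (a : nat) (s : Seq l) :
  cyl (a :: nil) s -> ~ cyl_part a s -> null_part s.
Proof.
  intros Hs Hn; destruct (Hcover s) as [i [Hi Hi']].
  destruct (Hatom i Hi) as [[b [_ Hb]]|Hnull]; [exfalso | exists i; auto].
  apply Hn; exists i; split; [split; [exact Hi|] | exact Hi'].
  intros t Ht; pose proof (Hb t Ht); pose proof (Hb s Hi'); rewrite cyl_one in *; congruence.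
Qed.

Lemma cylinder_approximable (C : SetS l) :
  is_cylinder C -> approximable l m (partition_sets P n) C.
Proof.
  intros [w Hw].
  set (G := fun s => forall j, (j < length w)%nat -> preim_shift j (cyl_part (nth j w 0%nat)) s).
  assert (HG : gen_sigma (partition_sets P n) G).
  { apply gen_sigma_finite_inter; intros j; apply partition_sets_preim_shift.
    apply gs_union; intros i; apply partition_sets_atom_if. }
  exists G; split; [exact HG|].
  apply (measure_null_subset l Q p m Hm _ null_part); [| exact measurable_null_part | exact null_part_null |].
  - apply measurable_symdiff; [apply (gen_sigma_mono _ _ _ measurable_partition_sets HG) | apply gs_base; exists w; exact Hw].
  - intros s [[HGs HCs]|[HCs HGs]]; rewrite Hw in HCs.
    + exfalso; apply HCs; intros j Hj.
      apply (proj1 (cyl_one _ (shift j s))), cyl_part_sub, (HGs j Hj).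
    + apply NNPP; intros Hn; apply HGs; intros j Hj; apply NNPP; intros Hc.
      apply Hn, (null_part_shift j), (cyl_sub_cyl_part (nth j w 0%nat)); [|exact Hc].
      apply (proj2 (cyl_one _ (shift j s))), HCs, Hj.
Qed.

Lemma partition_generating : generating m P n.
Proof.
  intros B; apply (approximable_measurable l Q p m Hm);
    [exact measurable_partition_sets | exact cylinder_approximable].
Qed.

Hypothesis Hp_pos : forall a, (a <= l)%nat -> 0 < p a.
Hypothesis Htransition : forall i j, (i <= n)%nat -> (j <= n)%nat ->
  (exists a, (a <= l)%nat /\
     forall s, inter (P i) (preim_shift 1 (P j)) s <-> inter (cyl (a :: nil)) (preim_shift 1 (P j)) s)
  \/ m (inter (P i) (preim_shift 1 (P j))) = 0.

Lemma measurable_itin (idx : nat -> nat) (N : nat) :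
  (forall t, (t < N)%nat -> (idx t <= n)%nat) -> measurable (itin P idx N).
Proof.
  induction N as [|N IH]; intros Hidx.
  - apply (gen_sigma_ext (fun _ => True)); [exact (gen_sigma_full _ (measurable_cyl nil))|].
    intros s; split; [intros _ t Ht; lia | auto].
  - apply (gen_sigma_ext (fun s => itin P idx N s /\ preim_shift N (P (idx N)) s)).
    + apply gen_sigma_inter; [apply IH; intros t Ht; apply Hidx; lia|].
      apply measurable_preim_shift, HPm, Hidx; lia.
    + intros s; rewrite itin_S; reflexivity.
Qed.

Lemma cylinder_shift_null (w : list nat) (b : nat) (X : SetS l) :
  (forall x, In x w -> (x <= l)%nat) -> (b <= n)%nat -> measurable X ->
  (forall s, X s -> P b s) -> m X = 0 ->
  m (fun s => cyl w s /\ X (shift (length w) s)) = 0.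
Proof.
  intros Hw Hb HX HXb HX0.
  destruct (Hatom b Hb) as [[a [Ha HPa]]|[Hinv HPb0]].
  - destruct w as [|x w].
    + cbn [length]; rewrite cyl_nil_inter; exact HX0.
    + rewrite (markov_shift_scale l Q p m Hm (x :: w) a), HX0; [ring | discriminate | exact Hw
        | exact Ha | exact (Hp_pos a Ha) | exact HX | intros s Hs; exact (HPa s (HXb s Hs))].
  - apply (measure_null_subset l Q p m Hm _ (P b)); [| apply HPm, Hb | exact HPb0 |].
    + apply gen_sigma_inter; [apply measurable_cyl | apply (measurable_preim_shift _ X HX)].
    + intros s [_ Hs]; exact (invariant_shift_iter _ Hinv _ s (HXb _ Hs)).
Qed.

Definition itin_cylinder (idx : nat -> nat) (K : nat) (w : list nat) : Prop :=
  length w = K /\ (forall x, In x w -> (x <= l)%nat) /\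
  forall s, itin P idx (S K) s <-> cyl w s /\ P (idx K) (shift K s).

Lemma itin_cylinder_succ (idx : nat -> nat) (K : nat) (w : list nat) :
  itin_cylinder idx K w ->
  forall s, itin P idx (S (S K)) s <->
    cyl w s /\ inter (P (idx K)) (preim_shift 1 (P (idx (S K)))) (shift K s).
Proof.
  intros [_ [_ Hw]] s; rewrite itin_S, Hw; unfold inter, preim_shift; rewrite shift_shift; tauto.
Qed.

Lemma itin_cylinder_exists (idx : nat -> nat) (K : nat) :
  (forall t, (t <= K)%nat -> (idx t <= n)%nat) -> 0 < m (itin P idx (S K)) ->
  exists w, itin_cylinder idx K w.
Proof.
  induction K as [|K IH]; intros Hidx Hpos.
  - exists nil; split; [reflexivity | split; [intros x []|]].
    intros s; unfold itin; split.
    + intros H; split; [apply cyl_nil | apply (H 0%nat); lia].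
    + intros [_ H] t Ht; replace t with 0%nat by lia; exact H.
  - assert (Hpos' : 0 < m (itin P idx (S K))).
    { apply (Rlt_le_trans _ _ _ Hpos), (measure_mono l Q p m Hm);
        [apply measurable_itin; intros t Ht; apply Hidx; lia .. |].
      intros s Hs t Ht; apply Hs; lia. }
    destruct (IH (fun t Ht => Hidx t ltac:(lia)) Hpos') as [w Hw].
    pose proof (itin_cylinder_succ idx K w Hw) as Hsucc; destruct Hw as [Hlen [Hrange _]].
    destruct (Htransition (idx K) (idx (S K)) ltac:(apply Hidx; lia) ltac:(apply Hidx; lia))
      as [[a [Ha Hiff]]|Hnull].
    + exists (w ++ a :: nil); split; [rewrite length_app, Hlen, Nat.add_1_r; reflexivity|split].
      * intros x Hx; apply in_app_or in Hx; destruct Hx as [Hx|[<-|[]]]; auto.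
      * intros s; rewrite Hsucc, Hiff, cyl_app, Hlen; unfold inter, preim_shift.
        rewrite shift_shift; pose proof (cyl_nil s); tauto.
    + assert (HX : measurable (inter (P (idx K)) (preim_shift 1 (P (idx (S K)))))).
      { apply gen_sigma_inter; [apply HPm, Hidx; lia | apply measurable_preim_shift, HPm, Hidx; lia]. }
      pose proof (cylinder_shift_null w (idx K) _ Hrange ltac:(apply Hidx; lia) HX
                    (fun s Hs => proj1 Hs) Hnull) as Hzero.
      rewrite Hlen, <- (set_ext _ _ Hsucc) in Hzero; lra.
Qed.

Lemma partition_markov : markov_property m P n.
Proof.
  intros N idx HN Hidx Hpos.
  destruct N as [|K]; [lia|]; replace (S K - 1)%nat with K by lia.
  destruct (itin_cylinder_exists idx K (fun t Ht => Hidx t ltac:(lia)) Hpos) as [w Hw].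
  rewrite (set_ext _ _ (itin_cylinder_succ idx K w Hw)).
  destruct Hw as [Hlen [Hrange Hiff]]; rewrite (set_ext _ _ Hiff) in Hpos |- *; subst K.
  assert (Hb : (idx (length w) <= n)%nat) by (apply Hidx; lia).
  set (X := inter (P (idx (length w))) (preim_shift 1 (P (idx (S (length w)))))).
  destruct (Hatom _ Hb) as [[a [Ha HPa]]|[Hinv HPb0]].
  - destruct w as [|x w].
    + cbn [length] in *; rewrite !cyl_nil_inter; reflexivity.
    + set (c := cyl_weight Q p (x :: w) * Q (last (x :: w) 0%nat) a / p a).
      assert (Hscale : forall Y, measurable Y -> (forall s, Y s -> P (idx (length (x :: w))) s) ->
                m (fun s => cyl (x :: w) s /\ Y (shift (length (x :: w)) s)) = c * m Y).
      { intros Y HY HYb; apply (markov_shift_scale l Q p m Hm); auto; discriminate. }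
      assert (HX : measurable X).
      { apply gen_sigma_inter; [apply HPm, Hb | apply measurable_preim_shift, HPm, Hidx; lia]. }
      rewrite (Hscale (P _)) in Hpos |- * by (apply HPm, Hb || auto).
      rewrite (Hscale X) by (exact HX || intros s Hs; apply Hs).
      assert (c <> 0 /\ m (P (idx (length (x :: w)))) <> 0) as [Hc HPb]
        by (split; intros H0; rewrite H0 in Hpos; lra).
      field; split; assumption.
  - rewrite (cylinder_shift_null w _ (P (idx (length w))) Hrange Hb (HPm _ Hb) (fun s Hs => Hs) HPb0)
      in Hpos; lra.
Qed.

End Partition.

Theorem lemma4 (l : nat) (Q : nat -> nat -> R) (p : nat -> R) (m : SetS l -> R)
  (HQ : stochastic l Q) (Hp : stationary_pos l Q p) (Hm : markov_measure l Q p m)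
  (n : nat) (P : nat -> SetS l) (HP : meas_partition P n)
  (H1 : forall i, (i <= n)%nat ->
          (exists a, (a <= l)%nat /\ forall s, P i s -> cyl (a :: nil) s)
          \/ ((forall s, preim_shift 1 (P i) s <-> P i s) /\ m (P i) = 0))
  (H2 : forall i j, (i <= n)%nat -> (j <= n)%nat ->
          (exists a, (a <= l)%nat /\
             forall s, inter (P i) (preim_shift 1 (P j)) s
                       <-> inter (cyl (a :: nil)) (preim_shift 1 (P j)) s)
          \/ m (inter (P i) (preim_shift 1 (P j))) = 0) :
  generating m P n /\ markov_property m P n.
Proof.
  destruct HP as [HPm [_ Hcover]]; split.
  - exact (partition_generating l Q p m n P Hm HPm H1 Hcover).
  - exact (partition_markov l Q p m n P Hm HPm H1 (proj1 Hp) H2).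
Qed.
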